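(* Let $Q=(q_n)_{n\ge1}$ be a basic sequence that is infinite in limit, and let $i>2$ be an integer such that $\sum_{j=1}^i jl_j>\sum_{j=1}^i 2l_j$. For real $w,z\ge0$ let $$f_i(w,z)=\frac{\left(\sum_{j=1}^i 2l_j\right)+2w+z}{\left(\sum_{j=1}^i jl_j\right)+(i+1)w+z}.$$ Then for all $(w,z)\in\{0,1,\dots,l_{i+1}\}\times\{0,1,\dots,i\}$, $$f_i(w,z)<f_i(0,i+1)=\frac{\left(\sum_{j=1}^i 2l_j\right)+i+1}{\left(\sum_{j=1}^i jl_j\right)+i+1}.$$
   Context: A basic sequence is a sequence $Q=(q_n)_{n\ge1}$ of integers with $q_n\ge 2$; it is infinite in limit if $q_n\to\infty$. For each positive integer $j$ let $\nu_j=\min\{N : q_m\ge 2j^2 \text{ for all } m\ge N\}$. Define $l_1=\max(\nu_2-1,1)$ and, recursively for $i\ge 2$, $l_i=\max\big(\min\{k\in\mathbb{N} : l_1+2l_2+\cdots+(i-1)l_{i-1}+ik\ge \nu_{i+1}-1\},1\big)$, where $\mathbb{N}$ is the set of positive integers. *)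

From mathcomp Require Import all_boot all_order all_algebra.
From mathcomp Require Import boolp zify.
Set Implicit Arguments. Unset Strict Implicit. Unset Printing Implicit Defensive.
Import Order.TTheory GRing.Theory Num.Theory.

(* A sequence Q = (q_n)_{n>=1} is modelled as q : nat -> nat; the value q 0 is ignored. *)
Definition basic_seq (q : nat -> nat) : Prop := forall n, 1 <= n -> 2 <= q n.

Definition infinite_in_limit (q : nat -> nat) : Prop :=
  forall K, exists N, forall n, N <= n -> K <= q n.

Definition nu_pred (q : nat -> nat) (j : nat) : pred nat :=
  fun N => (0 < N) && `[< forall m, N <= m -> 2 * j ^ 2 <= q m >].

(* nu_j = min {N in N_{>0} : q_m >= 2 j^2 for all m >= N}; 0 if no such N
   (which cannot happen when q is infinite in limit). *)
Definition nu (q : nat -> nat) (j : nat) : nat :=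
  match pselect (exists N, nu_pred q j N) with
  | left H => ex_minn H
  | right _ => 0
  end.

Definition lmin_pred (S i v : nat) : pred nat :=
  fun k => (0 < k) && (v - 1 <= S + i.+1 * k).

Lemma lmin_ex (S i v : nat) : exists k, lmin_pred S i v k.
Proof.
exists v.+1; rewrite /lmin_pred /=.
have H : v - 1 <= S + i.+1 * v.+1.
  nia.
by rewrite H.
Qed.

Definition lmin (S i v : nat) : nat := ex_minn (lmin_ex S i v).

(* lS q i = (l_i, l_1 + 2 l_2 + ... + i l_i) *)
Fixpoint lS (q : nat -> nat) (i : nat) : nat * nat :=
  match i with
  | 0 => (0, 0)
  | n.+1 =>
    match n with
    | 0 => let l1 := maxn (nu q 2 - 1) 1 in (l1, l1)
    | m.+1 =>
      (* here i = m.+2 and n = m.+1 = i - 1 *)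
      let S := (lS q n).2 in
      let li := maxn (lmin S m.+1 (nu q m.+3)) 1 in
      (li, S + m.+2 * li)
    end
  end.

Definition l (q : nat -> nat) (i : nat) : nat := (lS q i).1.

Definition f_i (R : realFieldType) (q : nat -> nat) (i : nat) (w z : R) : R :=
  ((\sum_(1 <= j < i.+1) 2 * l q j)%N%:R + 2 * w + z)
  / ((\sum_(1 <= j < i.+1) j * l q j)%N%:R + (i.+1)%:R * w + z).

(* Clearing denominators, with c := i + 1, A := sum 2 l_j and B := sum j l_j,
   (A + c) (B + c w + z) - (A + 2 w + z) (B + c) = (c - z) (B - A) + w (c A - 2 B + c (c - 2)).
   The first term is positive since z < c and A < B; the second is nonnegative since
   B <= i * sum l_j, i.e. 2 B <= c A. *)
From mathcomp Require Import all_boot all_order all_algebra.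
From mathcomp Require Import lra zify.
Import Order.TTheory GRing.Theory Num.Theory.
Local Open Scope ring_scope.

Lemma ltr_ratio_shift (R : realFieldType) (A B c w z : R) :
  0 <= A -> A < B -> 2 <= c -> 2 * B <= c * A -> 0 <= w -> 0 <= z -> z < c ->
  (A + 2 * w + z) / (B + c * w + z) < (A + c) / (B + c).
Proof.
move=> A_ge0 ltAB c_ge2 le2B_cA w_ge0 z_ge0 ltzc.
have pos_gap : 0 < (c - z) * (B - A) by rewrite mulr_gt0 ?subr_gt0.
have nneg_drift : 0 <= w * (c * A - 2 * B + c * (c - 2)).
  by rewrite mulr_ge0 // addr_ge0 ?subr_ge0 // mulr_ge0 ?subr_ge0 //; lra.
have cw_ge0 : 0 <= c * w by rewrite mulr_ge0 //; lra.
rewrite ltr_pdivrMr; last by lra.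
rewrite mulrAC ltr_pdivlMr; last by lra.
nra.
Qed.

Lemma sum_weighted_leq (f : nat -> nat) (m n : nat) :
  (\sum_(m <= j < n.+1) j * f j <= n * \sum_(m <= j < n.+1) f j)%N.
Proof.
rewrite big_distrr /= big_nat_cond [X in (_ <= X)%N]big_nat_cond.
by apply: leq_sum => j /andP[/andP[_ ltjn] _]; rewrite leq_mul2r -ltnS ltjn orbT.
Qed.

Theorem mainTheorem15 (R : realFieldType) (q : nat -> nat) :
  basic_seq q -> infinite_in_limit q ->
  forall i : nat, (2 < i)%N ->
  (\sum_(1 <= j < i.+1) 2 * l q j < \sum_(1 <= j < i.+1) j * l q j)%N ->
  forall w z : nat, (w <= l q i.+1)%N -> (z <= i)%N ->
  @f_i R q i w%:R z%:R < @f_i R q i 0 (i.+1)%:R /\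
  @f_i R q i 0 (i.+1)%:R =
    ((\sum_(1 <= j < i.+1) 2 * l q j)%N%:R + (i.+1)%:R)
    / ((\sum_(1 <= j < i.+1) j * l q j)%N%:R + (i.+1)%:R).
Proof.
move=> _ _ i lt2i ltAB w z _ le_zi.
have f_i_at_0 : @f_i R q i 0 (i.+1)%:R =
    ((\sum_(1 <= j < i.+1) 2 * l q j)%N%:R + (i.+1)%:R)
    / ((\sum_(1 <= j < i.+1) j * l q j)%N%:R + (i.+1)%:R).
  by rewrite /f_i !mulr0 !addr0.
split; last exact: f_i_at_0.
rewrite f_i_at_0 /f_i.
have le2B_cA : (2 * \sum_(1 <= j < i.+1) j * l q j
               <= i.+1 * \sum_(1 <= j < i.+1) 2 * l q j)%N.
  have sum_double : (\sum_(1 <= j < i.+1) 2 * l q j = 2 * \sum_(1 <= j < i.+1) l q j)%N.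
    by rewrite big_distrr.
  have := sum_weighted_leq (l q) 1 i; rewrite sum_double; nia.
apply: ltr_ratio_shift; rewrite ?ler0n ?ltr_nat ?ler_nat ?ltnS //.
- exact: ltn_trans lt2i.
- by move: le2B_cA; rewrite -(ler_nat R) !natrM.
Qed.
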